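(* Let $n\in\mathbb N$ and let $X\in\mathcal H$ be independent of $\mathcal F_n$. Suppose either (i) $X$ is bounded below, or (ii) $X\in L^1_b$. Then $\mathcal E_n(X)=\mathcal E(X)$ q.s.
   Context: Standing setting. $(\Omega,\mathcal F)$ is a measurable space with a discrete-time filtration $(\mathcal F_t)_{t\in\mathbb N}$, $\mathcal F_0$ trivial and $\mathcal F=\sigma(\bigcup_t\mathcal F_t)$. $\mathcal H$ is a linear space of $\mathcal F$-measurable real functions on $\Omega$ containing the constants, such that $X\in\mathcal H$ implies $|X|\in\mathcal H$ and $I_AX\in\mathcal H$ for all $A\in\mathcal F$; $\mathcal H_t:=\{X\in\mathcal H: X \text{ is } \mathcal F_t\text{-measurable}\}$. $(\mathcal E_t)$ is an $\mathcal{SL}$-expectation (a family of maps $\mathcal E_t:\mathcal H\to\mathcal H_t$ that are monotone, time-consistent $\mathcal E_s\circ\mathcal E_t=\mathcal E_s$ for $s\le t$, satisfy $\mathcal E_t(I_AY)=I_A\mathcal E_t(Y)$ for $A\in\mathcal F_t$, $\mathcal E_t(Y)=Y$ for $Y\in\mathcal H_t$, are subadditive, satisfy $\mathcal E_t(\lambda Y)=\lambda^+\mathcal E_t(Y)+\lambda^-\mathcal E_t(-Y)$ for $\lambda\in\mathcal H_t$, and $\mathcal E_0(X_i)\to0$ whenever $X_i\downarrow0$ pointwise); $\mathcal E:=\mathcal E_0$. ''q.s.'' means outside a set $N$ with $\mathcal E(I_N)=0$. Independence: a random variable $Y\in\mathcal H$ is independent of $Z=(Z_1,\dots,Z_k)$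 ($Z_i\in\mathcal H$) under $\mathcal E$ if for every measurable $\varphi$ on $\mathbb R^{k+1}$ with $\varphi(Z,Y)\in\mathcal H$ and $\varphi(z,Y)\in\mathcal H$ for all $z$, one has $\mathcal E[\varphi(Z,Y)]=\mathcal E[\bar\varphi(Z)]$ where $\bar\varphi(z):=\mathcal E[\varphi(z,Y)]$. $X$ is independent of $\mathcal F_n$ if $X$ is independent of $I_A$ for every $A\in\mathcal F_n$. $\|X\|_1:=\mathcal E(|X|)$; $L^1$ is the completion of $\{X\in\mathcal H:\|X\|_1<\infty\}$ modulo null elements; $L^1_b$ is the completion of the bounded elements of $\mathcal H$ under $\|\cdot\|_1$, equivalently $L^1_b=\{X\in L^1:\lim_{n\to\infty}\mathcal E(|X|I_{\{|X|>n\}})=0\}$. *)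

From Stdlib Require Import Reals Classical ClassicalEpsilon.
Open Scope R_scope.

Definition is_sigma_algebra {T : Type} (S : (T -> Prop) -> Prop) : Prop :=
  S (fun _ => True) /\
  (forall A, S A -> S (fun x => ~ A x)) /\
  (forall A : nat -> T -> Prop, (forall i, S (A i)) -> S (fun x => exists i, A i x)).

Definition generated {T : Type} (G : (T -> Prop) -> Prop) : (T -> Prop) -> Prop :=
  fun A => forall S, is_sigma_algebra S -> (forall B, G B -> S B) -> S A.

Definition Borel_R : (R -> Prop) -> Prop :=
  generated (fun B => exists a, forall x, B x <-> x <= a).

Definition Borel_R2 : (R * R -> Prop) -> Prop :=
  generated (fun B => (exists a, forall z y, B (z, y) <-> z <= a) \/
                      (exists b, forall z y, B (z, y) <-> y <= b)).

Definition measurable {Omega : Type} (S : (Omega -> Prop) -> Prop) (X : Omega -> R) : Prop :=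
  forall B, Borel_R B -> S (fun w => B (X w)).

Definition borel_measurable2 (phi : R -> R -> R) : Prop :=
  forall B, Borel_R B -> Borel_R2 (fun p => B (phi (fst p) (snd p))).

Definition indic {Omega : Type} (A : Omega -> Prop) : Omega -> R :=
  fun w => if excluded_middle_informative (A w) then 1 else 0.

Definition filtered_space {Omega : Type} (F : (Omega -> Prop) -> Prop)
    (Fs : nat -> (Omega -> Prop) -> Prop) : Prop :=
  is_sigma_algebra F /\
  (forall t, is_sigma_algebra (Fs t)) /\
  (forall s t A, (s <= t)%nat -> Fs s A -> Fs t A) /\
  (forall t A, Fs t A -> F A) /\
  (forall A, Fs 0%nat A -> (forall w, ~ A w) \/ (forall w, A w)) /\
  (forall A, F A <-> generated (fun B => exists t, Fs t B) A).

Definition admissible_space {Omega : Type} (F : (Omega -> Prop) -> Prop)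
    (H : (Omega -> R) -> Prop) : Prop :=
  (forall X, H X -> measurable F X) /\
  (forall c : R, H (fun _ => c)) /\
  (forall X Y, H X -> H Y -> H (fun w => X w + Y w)) /\
  (forall (a : R) X, H X -> H (fun w => a * X w)) /\
  (forall X, H X -> H (fun w => Rabs (X w))) /\
  (forall A X, F A -> H X -> H (fun w => indic A w * X w)).

Definition H_t {Omega : Type} (Fs : nat -> (Omega -> Prop) -> Prop)
    (H : (Omega -> R) -> Prop) (t : nat) (X : Omega -> R) : Prop :=
  H X /\ measurable (Fs t) X.

(** SL-expectation (E t = \mathcal E_t), acting on H; values outside H are irrelevant. *)
Definition SL_expectation {Omega : Type} (Fs : nat -> (Omega -> Prop) -> Prop)
    (H : (Omega -> R) -> Prop) (E : nat -> (Omega -> R) -> (Omega -> R)) : Prop :=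
  (forall t X, H X -> H_t Fs H t (E t X)) /\
  (forall t X Y, H X -> H Y -> (forall w, X w <= Y w) -> forall w, E t X w <= E t Y w) /\
  (forall s t X, (s <= t)%nat -> H X -> forall w, E s (E t X) w = E s X w) /\
  (forall t A Y, Fs t A -> H Y ->
     forall w, E t (fun w' => indic A w' * Y w') w = indic A w * E t Y w) /\
  (forall t Y, H_t Fs H t Y -> forall w, E t Y w = Y w) /\
  (forall t X Y, H X -> H Y ->
     forall w, E t (fun w' => X w' + Y w') w <= E t X w + E t Y w) /\
  (forall t lam Y, H_t Fs H t lam -> H Y ->
     forall w, E t (fun w' => lam w' * Y w') w =
               Rmax (lam w) 0 * E t Y w + Rmax (- lam w) 0 * E t (fun w' => - Y w') w) /\
  (forall Xs : nat -> Omega -> R,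
     (forall i, H (Xs i)) ->
     (forall i w, Xs (S i) w <= Xs i w) ->
     (forall w, Un_cv (fun i => Xs i w) 0) ->
     forall w, Un_cv (fun i => E 0%nat (Xs i) w) 0).

(** Y is independent of Z (a single random variable) under E = E_0.
    Since E_0 takes values in the F_0-measurable (constant) functions, the
    value E[phi(z,Y)] is read off at the same point w. *)
Definition indep {Omega : Type} (H : (Omega -> R) -> Prop)
    (E : nat -> (Omega -> R) -> (Omega -> R)) (Y Z : Omega -> R) : Prop :=
  forall phi : R -> R -> R,
    borel_measurable2 phi ->
    H (fun w => phi (Z w) (Y w)) ->
    (forall z, H (fun w => phi z (Y w))) ->
    forall w, E 0%nat (fun w' => phi (Z w') (Y w')) w =
              E 0%nat (fun w' => E 0%nat (fun w'' => phi (Z w') (Y w'')) w) w.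

Definition indep_of_Fn {Omega : Type} (Fs : nat -> (Omega -> Prop) -> Prop)
    (H : (Omega -> R) -> Prop) (E : nat -> (Omega -> R) -> (Omega -> R))
    (n : nat) (X : Omega -> R) : Prop :=
  forall A, Fs n A -> indep H E X (indic A).

(** For X in H: X in L^1_b, via lim_m E(|X| I_{|X|>m}) = 0 (X in H has finite norm). *)
Definition in_L1b {Omega : Type} (E : nat -> (Omega -> R) -> (Omega -> R))
    (X : Omega -> R) : Prop :=
  forall w, Un_cv (fun m : nat =>
     E 0%nat (fun w' => Rabs (X w') * indic (fun w'' => Rabs (X w'') > INR m) w') w) 0.

Definition qs_eq {Omega : Type} (F : (Omega -> Prop) -> Prop)
    (E : nat -> (Omega -> R) -> (Omega -> R)) (X Y : Omega -> R) : Prop :=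
  exists N : Omega -> Prop, F N /\ (forall w, E 0%nat (indic N) w = 0) /\
    (forall w, ~ N w -> X w = Y w).

(* Let c be the (constant) value of E(X) = E_0(X).  For A in F_n and k >= -c,
   the properties of an SL-expectation (pulling out I_A, translation invariance,
   time consistency) and independence of X from I_A give the key identity
       E[I_A (E_n X + k)] = E[E_n (I_A (X + k))] = E[(c + k) I_A] = (c + k) E[I_A].
   Comparing with (c + k + d) E[I_A], resp. (c + k - d) E[I_A], shows that every
   F_n-set on which E_n X stays at distance >= d > 0 above, resp. below, c is
   null.  The deviation set {E_n X <> c} is the increasing union of such sets,
   and increasing unions of null sets are null by continuity of E from above. *)

From Stdlib Require Import Reals Classical ClassicalEpsilon Lra Lia
  FunctionalExtensionality PropExtensionality.
Open Scope R_scope.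

Lemma set_ext_transport {T : Type} (P : (T -> Prop) -> Prop) (A B : T -> Prop) :
  P A -> (forall x, A x <-> B x) -> P B.
Proof.
  intros HA HAB. replace B with A; auto.
  apply functional_extensionality; intro x; apply propositional_extensionality; auto.
Qed.

Section SigmaAlgebra.
Variables (T : Type) (S : (T -> Prop) -> Prop).
Hypothesis HS : is_sigma_algebra S.

Lemma sigma_full : S (fun _ => True).
Proof. destruct HS as [h _]; exact h. Qed.

Lemma sigma_compl (A : T -> Prop) : S A -> S (fun x => ~ A x).
Proof. destruct HS as [_ [h _]]; auto. Qed.

Lemma sigma_countable_union (A : nat -> T -> Prop) :
  (forall i, S (A i)) -> S (fun x => exists i, A i x).
Proof. destruct HS as [_ [_ h]]; auto. Qed.

Lemma sigma_empty : S (fun _ => False).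
Proof.
  apply set_ext_transport with (fun x => ~ True); [apply sigma_compl, sigma_full | tauto].
Qed.

Lemma sigma_union (A B : T -> Prop) : S A -> S B -> S (fun x => A x \/ B x).
Proof.
  intros HA HB.
  apply set_ext_transport with
      (fun x => exists i, (fun i => match i with O => A | _ => B end) i x).
  - apply sigma_countable_union. intros [|i]; auto.
  - intro x; split.
    + intros [[|i] h]; auto.
    + intros [h|h]; [exists O | exists 1%nat]; auto.
Qed.

Lemma sigma_inter (A B : T -> Prop) : S A -> S B -> S (fun x => A x /\ B x).
Proof.
  intros HA HB.
  apply set_ext_transport with (fun x => ~ (~ A x \/ ~ B x)).
  - apply sigma_compl, sigma_union; apply sigma_compl; auto.
  - intro x; destruct (classic (A x)), (classic (B x)); tauto.
Qed.

(** Measurability only needs to be checked on the sublevel sets {g <= a}: the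
    sets B whose preimage lies in S form a sigma-algebra containing the
    half-lines that generate the Borel sets. *)
Lemma measurable_of_sublevels (g : T -> R) :
  (forall a, S (fun u => g u <= a)) -> measurable S g.
Proof.
  intros Hg B HB.
  apply (HB (fun B => S (fun u => B (g u)))).
  - split; [|split].
    + apply sigma_full.
    + intros A HA. apply (sigma_compl (fun u => A (g u))); auto.
    + intros A HA. apply (sigma_countable_union (fun i u => A i (g u))); auto.
  - intros B' [a Ha]. apply set_ext_transport with (fun u => g u <= a); auto.
    intro x; rewrite Ha; tauto.
Qed.

Lemma measurable_const (c : R) : measurable S (fun _ => c).
Proof.
  apply measurable_of_sublevels. intro a. destruct (Rle_dec c a).
  - apply set_ext_transport with (fun _ => True); [apply sigma_full | tauto].
  - apply set_ext_transport with (fun _ => False); [apply sigma_empty | tauto].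
Qed.

Lemma measurable_sublevel (g : T -> R) (a : R) :
  measurable S g -> S (fun u => g u <= a).
Proof.
  intro Hg. apply (Hg (fun x => x <= a)).
  intros S' _ HG. apply HG. exists a. tauto.
Qed.

End SigmaAlgebra.

Lemma generated_sigma {T : Type} (G : (T -> Prop) -> Prop) : is_sigma_algebra (generated G).
Proof.
  split; [|split].
  - intros S HS HG. exact (sigma_full T S HS).
  - intros A HA S HS HG. apply (sigma_compl T S HS). apply HA; auto.
  - intros A HA S HS HG. apply (sigma_countable_union T S HS). intro i; apply HA; auto.
Qed.

Lemma generated_base {T : Type} (G : (T -> Prop) -> Prop) (B : T -> Prop) :
  G B -> generated G B.
Proof. intros h S HS HG; auto. Qed.

Lemma indic_in {T : Type} (A : T -> Prop) (w : T) : A w -> indic A w = 1.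
Proof. unfold indic; destruct excluded_middle_informative; tauto. Qed.

Lemma indic_out {T : Type} (A : T -> Prop) (w : T) : ~ A w -> indic A w = 0.
Proof. unfold indic; destruct excluded_middle_informative; tauto. Qed.

Lemma indic_decreasing_cv {T : Type} (B : nat -> T -> Prop) :
  (forall m w, B (S m) w -> B m w) -> (forall w, exists m, ~ B m w) ->
  forall w, Un_cv (fun m => indic (B m) w) 0.
Proof.
  intros Hdec Hempty w eps heps. destruct (Hempty w) as [m0 Hm0].
  exists m0. intros m hm. rewrite indic_out.
  - rewrite R_dist_eq; exact heps.
  - induction hm; auto.
Qed.

Section SLExpectation.
Variables (Omega : Type) (F : (Omega -> Prop) -> Prop)
  (Fs : nat -> (Omega -> Prop) -> Prop) (H : (Omega -> R) -> Prop)
  (E : nat -> (Omega -> R) -> (Omega -> R)).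
Hypothesis hF : filtered_space F Fs.
Hypothesis hH : admissible_space F H.
Hypothesis hE : SL_expectation Fs H E.

Lemma F_sigma : is_sigma_algebra F.
Proof. destruct hF as [h _]; auto. Qed.

Lemma Fs_sigma (t : nat) : is_sigma_algebra (Fs t).
Proof. destruct hF as [_ [h _]]; auto. Qed.

Lemma Fs_in_F (t : nat) (A : Omega -> Prop) : Fs t A -> F A.
Proof. destruct hF as [_ [_ [_ [h _]]]]; eauto. Qed.

Lemma H_ext (Y Z : Omega -> R) : H Y -> (forall w, Y w = Z w) -> H Z.
Proof. intros h e. replace Z with Y; auto. apply functional_extensionality; auto. Qed.

Lemma H_const (c : R) : H (fun _ => c).
Proof. destruct hH as [_ [h _]]; auto. Qed.

Lemma H_add (Y Z : Omega -> R) : H Y -> H Z -> H (fun w => Y w + Z w).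
Proof. destruct hH as [_ [_ [h _]]]; auto. Qed.

Lemma H_scale (a : R) (Y : Omega -> R) : H Y -> H (fun w => a * Y w).
Proof. destruct hH as [_ [_ [_ [h _]]]]; auto. Qed.

Lemma H_indic_mul (A : Omega -> Prop) (Y : Omega -> R) :
  F A -> H Y -> H (fun w => indic A w * Y w).
Proof. destruct hH as [_ [_ [_ [_ [_ h]]]]]; auto. Qed.

Lemma H_indic (A : Omega -> Prop) : F A -> H (indic A).
Proof.
  intro FA. apply H_ext with (fun w => indic A w * 1).
  - apply H_indic_mul; auto; apply H_const.
  - intro; ring.
Qed.

Lemma E_adapted (t : nat) (Y : Omega -> R) : H Y -> H (E t Y) /\ measurable (Fs t) (E t Y).
Proof. destruct hE as [h _]. apply h. Qed.

Lemma E_const (t : nat) (c : R) (w : Omega) : E t (fun _ => c) w = c.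
Proof.
  destruct hE as [_ [_ [_ [_ [h _]]]]]. apply h.
  split; [apply H_const | apply measurable_const, Fs_sigma].
Qed.

Lemma E_mono (t : nat) (Y Z : Omega -> R) :
  H Y -> H Z -> (forall w, Y w <= Z w) -> forall w, E t Y w <= E t Z w.
Proof. destruct hE as [_ [h _]]; auto. Qed.

Lemma E_subadd (t : nat) (Y Z : Omega -> R) :
  H Y -> H Z -> forall w, E t (fun w' => Y w' + Z w') w <= E t Y w + E t Z w.
Proof. destruct hE as [_ [_ [_ [_ [_ [h _]]]]]]; auto. Qed.

(** Translation invariance, from subadditivity applied with k and -k. *)
Lemma E_translate (t : nat) (Y : Omega -> R) (k : R) :
  H Y -> forall w, E t (fun w' => Y w' + k) w = E t Y w + k.
Proof.
  intros HY w.
  assert (HYk : H (fun w' => Y w' + k)) by (apply H_add; auto; apply H_const).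
  pose proof (E_subadd t Y (fun _ => k) HY (H_const k) w) as up.
  pose proof (E_subadd t (fun w' => Y w' + k) (fun _ => -k) HYk (H_const (-k)) w) as down.
  cbv beta in up, down. rewrite E_const in up, down.
  replace (fun w' => Y w' + k + - k) with Y in down
    by (apply functional_extensionality; intro; ring).
  lra.
Qed.

(** Positive homogeneity, the constant case of the lambda^+/lambda^- rule. *)
Lemma E_pos_homog (t : nat) (a : R) (Y : Omega -> R) :
  0 <= a -> H Y -> forall w, E t (fun w' => a * Y w') w = a * E t Y w.
Proof.
  intros ha HY w. destruct hE as [_ [_ [_ [_ [_ [_ [h _]]]]]]].
  rewrite (h t (fun _ => a) Y); auto.
  - rewrite Rmax_left, Rmax_right by lra. ring.
  - split; [apply H_const | apply measurable_const, Fs_sigma].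
Qed.

Lemma E_indic_nonneg (t : nat) (A : Omega -> Prop) : F A -> forall w, 0 <= E t (indic A) w.
Proof.
  intros FA w. rewrite <- (E_const t 0 w). apply E_mono.
  - apply H_const.
  - apply H_indic; auto.
  - intro; unfold indic; destruct excluded_middle_informative; lra.
Qed.

(** E_0 takes constant values, since F_0 is trivial. *)
Lemma E0_constant (Y : Omega -> R) : H Y -> forall w1 w2, E O Y w1 = E O Y w2.
Proof.
  intro HY.
  assert (le : forall w1 w2, E O Y w2 <= E O Y w1).
  { intros w1 w2. destruct hF as [_ [_ [_ [_ [trivial0 _]]]]].
    pose proof (measurable_sublevel _ _ (E O Y) (E O Y w1) (proj2 (E_adapted O Y HY)))
      as sub.
    destruct (trivial0 _ sub) as [empty|full].
    - exfalso; apply (empty w1); lra.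
    - apply full. }
  intros; apply Rle_antisym; auto.
Qed.

Definition qs_null (A : Omega -> Prop) : Prop :=
  F A /\ forall w, E O (indic A) w = 0.

Lemma capacity_cover (A B C : Omega -> Prop) :
  F A -> F B -> F C -> (forall w, C w -> A w \/ B w) ->
  forall w, E O (indic C) w <= E O (indic A) w + E O (indic B) w.
Proof.
  intros FA FB FC cover w.
  apply Rle_trans with (E O (fun w' => indic A w' + indic B w') w).
  - apply E_mono; try apply H_add; try apply H_indic; auto.
    intro w'. unfold indic.
    repeat destruct excluded_middle_informative; try lra.
    destruct (cover w'); tauto.
  - apply E_subadd; apply H_indic; auto.
Qed.

Lemma null_union (A B : Omega -> Prop) :
  qs_null A -> qs_null B -> qs_null (fun w => A w \/ B w).
Proof.
  intros [FA nA] [FB nB].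
  assert (FAB : F (fun w => A w \/ B w)) by (apply sigma_union; auto; apply F_sigma).
  split; auto. intro w.
  pose proof (capacity_cover A B _ FA FB FAB (fun _ h => h) w).
  pose proof (E_indic_nonneg O _ FAB w).
  rewrite nA, nB in *. lra.
Qed.

(** Increasing unions of null sets are null: the union U is covered by A_m and
    U \ A_m, and the latter decrease to the empty set, so their capacities tend
    to 0 by continuity of E_0 from above. *)
Lemma null_increasing_union (A : nat -> Omega -> Prop) :
  (forall m, qs_null (A m)) -> (forall m w, A m w -> A (S m) w) ->
  qs_null (fun w => exists m, A m w).
Proof.
  intros nullA incr.
  set (U := fun w => exists m, A m w).
  set (B := fun m w => U w /\ ~ A m w).
  assert (FU : F U) by (apply sigma_countable_union; [apply F_sigma | apply nullA]).
  assert (FB : forall m, F (B m)).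
  { intro m. apply sigma_inter; [apply F_sigma | auto |].
    apply sigma_compl; [apply F_sigma | apply nullA]. }
  split; auto. intro w.
  assert (cvB : Un_cv (fun m => E O (indic (B m)) w) 0).
  { destruct hE as [_ [_ [_ [_ [_ [_ [_ continuity]]]]]]].
    apply continuity.
    - intro; apply H_indic, FB.
    - intros m w'. unfold indic.
      repeat destruct excluded_middle_informative; try lra.
      exfalso. destruct b as [hU hA]. apply n. split; auto.
    - apply indic_decreasing_cv.
      + intros m w' [hU hA]. split; auto.
      + intro w'. destruct (classic (U w')) as [[m hm]|hU].
        * exists m. intros [_ h]; auto.
        * exists O. intros [h _]; auto. }
  assert (bound : forall m, E O (indic U) w <= E O (indic (B m)) w).
  { intro m.
    assert (cover : forall w', U w' -> A m w' \/ B m w').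
    { intros w' hU. destruct (classic (A m w')); unfold B; tauto. }
    pose proof (capacity_cover (A m) (B m) U (proj1 (nullA m)) (FB m) FU cover w) as le.
    rewrite (proj2 (nullA m)) in le. lra. }
  apply Rle_antisym.
  - apply (Rle_cv_lim (Un := fun _ => E O (indic U) w) bound); [|exact cvB].
    intros eps heps. exists O. intros. rewrite R_dist_eq; auto.
  - apply E_indic_nonneg; auto.
Qed.

Section Independence.
Variables (n : nat) (X : Omega -> R) (c : R).
Hypothesis hX : H X.
Hypothesis hind : indep_of_Fn Fs H E n X.
Hypothesis hc : forall w, E O X w = c.

(** The test function (z, y) |-> I_{z > 1/2} (y + k); on indicators z = I_A(w)
    it computes I_A(w) (y + k). *)
Definition cut_shift (k z y : R) : R := if Rle_dec z (1/2) then 0 else y + k.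

Lemma cut_shift_measurable (k : R) : borel_measurable2 (cut_shift k).
Proof.
  intros B HB.
  apply (measurable_of_sublevels _ Borel_R2 (generated_sigma _)
           (fun p => cut_shift k (fst p) (snd p))); auto.
  intro a.
  assert (low_z : Borel_R2 (fun p => fst p <= 1/2)).
  { apply generated_base. left. exists (1/2). intros; simpl; tauto. }
  assert (low_y : Borel_R2 (fun p => snd p <= a - k)).
  { apply generated_base. right. exists (a - k). intros; simpl; tauto. }
  destruct (Rle_dec 0 a).
  - apply set_ext_transport with (fun p => fst p <= 1/2 \/ snd p <= a - k).
    + apply sigma_union; auto. apply generated_sigma.
    + intros [z y]; simpl; unfold cut_shift.
      destruct (Rle_dec z (1/2)); split; intros h; try destruct h; try lra; tauto.
  - apply set_ext_transport with (fun p => ~ fst p <= 1/2 /\ snd p <= a - k).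
    + apply sigma_inter; [apply generated_sigma | apply sigma_compl | exact low_y].
      * apply generated_sigma.
      * exact low_z.
    + intros [z y]; simpl; unfold cut_shift.
      destruct (Rle_dec z (1/2)); split; intros h; try destruct h; try lra; tauto.
Qed.

Lemma cut_shift_indic (A : Omega -> Prop) (k : R) (w : Omega) (y : R) :
  cut_shift k (indic A w) y = indic A w * (y + k).
Proof. unfold indic, cut_shift. destruct excluded_middle_informative, Rle_dec; lra. Qed.

Lemma key_identity (A : Omega -> Prop) (k : R) :
  Fs n A -> 0 <= c + k -> forall w,
  E O (fun w' => indic A w' * (E n X w' + k)) w = (c + k) * E O (indic A) w.
Proof.
  intros HA hk w.
  assert (FA : F A) by (eapply Fs_in_F; eauto).
  assert (HXk : H (fun w' => X w' + k)) by (apply H_add; auto; apply H_const).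
  assert (Htest : H (fun w' => cut_shift k (indic A w') (X w'))).
  { apply (H_ext _ _ (H_indic_mul A _ FA HXk)). intro; symmetry; apply cut_shift_indic. }
  destruct hE as [_ [_ [consistency [pull_out _]]]].
  assert (pulled : (fun w' => indic A w' * (E n X w' + k))
                   = E n (fun w' => cut_shift k (indic A w') (X w'))).
  { apply functional_extensionality; intro w'.
    rewrite <- (E_translate n X k hX), <- pull_out; auto.
    f_equal. apply functional_extensionality; intro. symmetry; apply cut_shift_indic. }
  assert (inner : forall w', E O (fun w'' => cut_shift k (indic A w') (X w'')) w
                             = (c + k) * indic A w').
  { intro w'. unfold indic at 2. destruct excluded_middle_informative.
    - rewrite indic_in by auto. unfold cut_shift.
      destruct Rle_dec; [lra|]. rewrite E_translate, hc; auto. ring.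
    - rewrite indic_out by auto. unfold cut_shift.
      destruct Rle_dec; [|lra]. rewrite E_const. ring. }
  rewrite pulled, consistency, (hind A HA (cut_shift k) (cut_shift_measurable k)); auto.
  - replace (fun w' => E O (fun w'' => cut_shift k (indic A w') (X w'')) w)
      with (fun w' => (c + k) * indic A w') by (apply functional_extensionality; auto).
    apply E_pos_homog; auto. apply H_indic; auto.
  - intro z; unfold cut_shift; destruct Rle_dec; [apply H_const | auto].
  - lia.
Qed.

(** An F_n-set on which E_n X exceeds c by at least d > 0 is null: on it,
    (c + d + k) I_A <= I_A (E_n X + k), so (c + d + k) E[I_A] <= (c + k) E[I_A]. *)
Lemma null_above (A : Omega -> Prop) (d : R) :
  Fs n A -> 0 < d -> (forall w, A w -> c + d <= E n X w) -> qs_null A.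
Proof.
  intros HA hd above.
  assert (FA : F A) by (eapply Fs_in_F; eauto).
  split; auto. intro w.
  assert (hk : 0 <= c + Rabs c) by (unfold Rabs; destruct Rcase_abs; lra).
  assert (le : E O (fun w' => (c + d + Rabs c) * indic A w') w
               <= E O (fun w' => indic A w' * (E n X w' + Rabs c)) w).
  { apply E_mono.
    - apply H_scale, H_indic; auto.
    - apply H_indic_mul; auto. apply H_add; [apply E_adapted; auto | apply H_const].
    - intro w'. destruct (classic (A w')) as [a|a].
      + rewrite indic_in by auto. specialize (above w' a). lra.
      + rewrite indic_out by auto. lra. }
  rewrite E_pos_homog, key_identity in le by (auto; try apply H_indic; auto; lra).
  pose proof (E_indic_nonneg O A FA w). nra.
Qed.

Lemma null_below (A : Omega -> Prop) (d : R) :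
  Fs n A -> 0 < d -> (forall w, A w -> E n X w <= c - d) -> qs_null A.
Proof.
  intros HA hd below.
  assert (FA : F A) by (eapply Fs_in_F; eauto).
  split; auto. intro w.
  set (k := Rabs c + d).
  assert (hk : 0 <= c - d + k) by (unfold k, Rabs; destruct Rcase_abs; lra).
  assert (le : E O (fun w' => indic A w' * (E n X w' + k)) w
               <= E O (fun w' => (c - d + k) * indic A w') w).
  { apply E_mono.
    - apply H_indic_mul; auto. apply H_add; [apply E_adapted; auto | apply H_const].
    - apply H_scale, H_indic; auto.
    - intro w'. destruct (classic (A w')) as [a|a].
      + rewrite indic_in by auto. specialize (below w' a). lra.
      + rewrite indic_out by auto. lra. }
  rewrite E_pos_homog, key_identity in le by (auto; try apply H_indic; auto; lra).
  pose proof (E_indic_nonneg O A FA w). nra.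
Qed.

Definition deviation (m : nat) (w : Omega) : Prop :=
  E n X w <= c - / INR (S m) \/ ~ E n X w <= c + / INR (S m).

Lemma deviation_null (m : nat) : qs_null (deviation m).
Proof.
  assert (hd : 0 < / INR (S m)) by (apply Rinv_0_lt_compat, lt_0_INR; lia).
  assert (measurable (Fs n) (E n X)) by (apply E_adapted; auto).
  apply null_union.
  - apply (null_below _ (/ INR (S m))); auto.
    apply measurable_sublevel; auto; apply Fs_sigma.
  - apply (null_above _ (/ INR (S m))); auto.
    + apply sigma_compl; [apply Fs_sigma |].
      apply measurable_sublevel; auto; apply Fs_sigma.
    + intros w h. lra.
Qed.

Lemma deviation_increasing (m : nat) (w : Omega) : deviation m w -> deviation (S m) w.
Proof.
  assert (shrink : / INR (S (S m)) < / INR (S m)).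
  { apply Rinv_lt_contravar.
    - apply Rmult_lt_0_compat; apply lt_0_INR; lia.
    - apply lt_INR; lia. }
  assert (pos : 0 < / INR (S (S m))) by (apply Rinv_0_lt_compat, lt_0_INR; lia).
  unfold deviation. intros [h|h]; [left | right]; lra.
Qed.

Lemma deviation_exhaustive (w : Omega) : E n X w <> c -> exists m, deviation m w.
Proof.
  intro ne.
  assert (hpos : 0 < Rabs (E n X w - c)) by (apply Rabs_pos_lt; lra).
  destruct (archimed_cor1 _ hpos) as [N [hN1 hN2]].
  exists (pred N). unfold deviation. replace (S (pred N)) with N by lia.
  revert hN1. unfold Rabs; destruct Rcase_abs; intro; [left | right]; lra.
Qed.

Lemma disagreement_null : qs_null (fun w => E n X w <> c).
Proof.
  apply set_ext_transport with (fun w => exists m, deviation m w).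
  - apply null_increasing_union; [apply deviation_null | apply deviation_increasing].
  - intro w. split.
    + intros [m [h|h]] e; rewrite e in h;
        pose proof (Rinv_0_lt_compat _ (lt_0_INR (S m) ltac:(lia))); lra.
    + apply deviation_exhaustive.
Qed.
End Independence.
End SLExpectation.

Theorem lemma4p3 (Omega : Type) (F : (Omega -> Prop) -> Prop)
  (Fs : nat -> (Omega -> Prop) -> Prop) (H : (Omega -> R) -> Prop)
  (E : nat -> (Omega -> R) -> (Omega -> R))
  (hF : filtered_space F Fs) (hH : admissible_space F H) (hE : SL_expectation Fs H E)
  (n : nat) (X : Omega -> R) (hX : H X) (hind : indep_of_Fn Fs H E n X)
  (hcase : (exists c : R, forall w, c <= X w) \/ in_L1b E X) :
  qs_eq F E (E n X) (E 0%nat X).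
Proof.
  destruct (classic (inhabited Omega)) as [[w0] | empty].
  - set (c := E O X w0).
    assert (hc : forall w, E O X w = c) by (intro w; apply (E0_constant Omega F Fs H E hF hE X hX)).
    destruct (disagreement_null Omega F Fs H E hF hH hE n X c hX hind hc) as [FN nullN].
    exists (fun w => E n X w <> c). repeat split; auto.
    intros w h. rewrite hc. apply NNPP; auto.
  - exists (fun _ => True). repeat split.
    + exact (sigma_full _ _ (F_sigma _ _ _ hF)).
    + intro w; exfalso; apply empty; constructor; exact w.
    + intro w; exfalso; apply empty; constructor; exact w.
Qed.
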